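(* Suppose $\rho\in\mathcal{P}$. Then there is a positive constant $C_9$ such that $|V_c(x,y)|\le C_9$ for all $(x,y)$ with $x<-3a$ and for all $0<\delta\le\delta_\mu$.
   Context: Fix $a>0$. For $0<\delta<1$ and constants $\beta>0$, $\lambda\in\mathbb{R}$ ($\lambda$ feasible: $\lambda>0$ if $0<\beta<1$, $\lambda\ge-1$ if $\beta=1$, $\lambda\ne0$ if $\beta>1$), put $\mu=\delta+\lambda\delta^{\beta}$, and let $\delta_\mu\in(0,1)$ be a number with $\mu\ge0$ for $0<\delta\le\delta_\mu$. The dielectric constant is $\varepsilon_c=1+\mathrm{i}\mu$ for $x<0$, $\varepsilon_s=-1+\mathrm{i}\delta$ for $0\le x\le a$, $\varepsilon_m=1$ for $x>a$. Let $\mathcal{M}=\{(x,y)\in\mathbb{R}^2:x>a\}$. $\mathcal{P}$ is the set of real-valued $\rho\in L^2(\mathcal{M})\cap L^\infty(\mathcal{M})$ with compact support in $\mathcal{M}$, $0<|\operatorname{supp}\rho|<\infty$ and $\int\!\!\int\rho=0$; $\rho$ is extended by $0$. $d_0,d_1$ are the minimal and maximal $x$-coordinates of $\operatorname{supp}\rho$. Fourier transform in $y$: $\widehat f(x,k)=\int f(x,y)\mathrm{e}^{-\mathrm{i}ky}\mathrm{d}y$; $I_k=\int_{d_0}^{d_1}\widehat\rho(s,k)\mathrm{e}^{-|k|s}\mathrm{d}s$. Let $\chi_c=\varepsilon_s/\varepsilon_c$, $\psi_k^+=\frac{1}{2\chi_c}[(\chi_c+1)\mathrm{e}^{|k|a}+(\chi_c-1)\mathrm{e}^{-|k|a}]$,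 $\psi_k^-=\frac{|k|\varepsilon_s}{2\chi_c}[(\chi_c+1)\mathrm{e}^{|k|a}-(\chi_c-1)\mathrm{e}^{-|k|a}]$, $A_k=I_k/(\mathrm{e}^{-|k|a}(|k|\psi_k^++\psi_k^-))$. The potential $V$ is defined by its $y$-Fourier transform: for $k\ne0$, $\widehat V(x,k)=A_k\mathrm{e}^{|k|x}$ for $x<0$; $\widehat V(x,k)=\frac{A_k}{2\chi_c}[(\chi_c+1)\mathrm{e}^{|k|x}+(\chi_c-1)\mathrm{e}^{-|k|x}]$ for $0\le x\le a$; $\widehat V(x,k)=A_k\psi_k^+\cosh(|k|(x-a))+\frac{A_k\psi_k^-}{|k|}\sinh(|k|(x-a))+\frac1{|k|}\int_a^x\sinh(|k|(x'-x))\widehat\rho(x',k)\mathrm{d}x'$ for $x>a$. It solves $-\nabla\cdot(\varepsilon\nabla V)=\rho$ in $\mathbb{R}^2$ with $V$, $\varepsilon\partial_xV$ continuous across $x=0,a$ and $\partial_xV\to0$ as $|x|\to\infty$. $V_c=V$ restricted to $\{x<0\}$, where $V$ is harmonic; pointwise values refer to its smooth representative. *)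

From HB Require Import structures.
From mathcomp Require Import all_boot all_order all_algebra.
From mathcomp Require Import all_classical all_reals all_analysis.
From mathcomp Require Import complex.

Set Implicit Arguments.
Unset Strict Implicit.
Unset Printing Implicit Defensive.
Import Order.TTheory GRing.Theory Num.Theory.
Local Open Scope ring_scope.
Local Open Scope classical_set_scope.

Section Defs.
Variable R : realType.

Definition lebR := (@lebesgue_measure R).

Definition cexpi (t : R) : R[i] := Complex (cos t) (sin t).

Definition cint (f : R -> R[i]) : R[i] :=
  Complex (Rintegral lebR setT (fun t => complex.Re (f t)))
          (Rintegral lebR setT (fun t => complex.Im (f t))).

Definition cmod (z : R[i]) : R := Num.sqrt (complex.Re z ^+ 2 + complex.Im z ^+ 2).

Definition rC (r : R) : R[i] := Complex r 0.

Definition rho_hat (rho : R -> R -> R) (x k : R) : R[i] :=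
  cint (fun y => rC (rho x y) * cexpi (- (k * y))).

(* I_k = \int rho_hat(s,k) e^{-|k|s} ds  (rho_hat(.,k) vanishes outside [d0,d1]) *)
Definition Ik (rho : R -> R -> R) (k : R) : R[i] :=
  cint (fun s => rho_hat rho s k * rC (expR (- (`|k| * s)))).

Definition mu_of (beta lam delta : R) : R := delta + lam * (delta `^ beta).

Definition eps_c (beta lam delta : R) : R[i] := Complex 1 (mu_of beta lam delta).
Definition eps_s (delta : R) : R[i] := Complex (-1) delta.
Definition chi_c (beta lam delta : R) : R[i] := eps_s delta / eps_c beta lam delta.

Definition psi_plus (a beta lam delta k : R) : R[i] :=
  let chi := chi_c beta lam delta in
  (2 * chi)^-1 * ((chi + 1) * rC (expR (`|k| * a)) + (chi - 1) * rC (expR (- (`|k| * a)))).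

Definition psi_minus (a beta lam delta k : R) : R[i] :=
  let chi := chi_c beta lam delta in
  rC `|k| * eps_s delta / (2 * chi) *
    ((chi + 1) * rC (expR (`|k| * a)) - (chi - 1) * rC (expR (- (`|k| * a)))).

Definition Ak (a beta lam : R) (rho : R -> R -> R) (delta k : R) : R[i] :=
  Ik rho k / (rC (expR (- (`|k| * a))) *
              (rC `|k| * psi_plus a beta lam delta k + psi_minus a beta lam delta k)).

Definition Vc (a beta lam : R) (rho : R -> R -> R) (delta x y : R) : R[i] :=
  rC ((2 * pi)^-1) *
  cint (fun k => Ak a beta lam rho delta k * rC (expR (`|k| * x)) * cexpi (k * y)).

(* The class P (rho given as a function on R^2, extended by 0 outside M = {x > a}) *)
Definition in_P (a : R) (rho : R -> R -> R) : Prop :=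
  measurable_fun setT (fun p : R * R => rho p.1 p.2) /\
  (exists M : R, forall x y, `|rho x y| <= M) /\
  (exists x0 x1 y0 y1 : R, a < x0 /\
     forall x y, rho x y != 0 -> (x0 <= x <= x1) /\ (y0 <= y <= y1)) /\
  (0%E < (product_measure1 lebR lebR) [set p | rho p.1 p.2 != 0%R])%E /\
  ((\int[product_measure1 lebR lebR]_p (rho p.1 p.2)%:E)%E = 0%E).

End Defs.

From HB Require Import structures.
From mathcomp Require Import all_boot all_order all_algebra.
From mathcomp Require Import all_classical all_reals all_analysis.
From mathcomp Require Import complex.
From mathcomp Require Import lra ring measurable_realfun.
Import Order.TTheory GRing.Theory Num.Theory.
Import numFieldTopology.Exports numFieldNormedType.Exports.
Local Open Scope ring_scope.
Local Open Scope classical_set_scope.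

(* Since the charge has zero total mass, I_k is the integral of
   rho(s, y) (e^{-iky} e^{-|k|s} - 1), an integrand that is O(|k|) on the
   compact support of rho; hence |I_k| <= K |k|.  Clearing the fractions in the
   denominator D_k of A_k gives D_k (2 eps_s) = |k| B_k with
   -Re B_k >= (4 - delta^2) e^{-2|k|a} >= 3 e^{-2|k|a}, because mu >= 0 and
   delta < 1.  As |2 eps_s| <= 4, this yields |A_k| <= (4K/3) e^{2|k|a}, so for
   x < -3a the integrand of V_c is dominated, uniformly in delta, by the
   integrable function (4K/3) e^{-a|k|}. *)

Section DominatedIntegral.
Context {R : realType} d (T : measurableType d) (m : {measure set T -> \bar R}).

Lemma ge0_le_integral_nomeas (f g : T -> \bar R) :
  (forall x, 0 <= f x)%E -> (forall x, f x <= g x)%E ->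
  (\int[m]_x f x <= \int[m]_x g x)%E.
Proof.
move=> f0 fg.
have g0 x : (0 <= g x)%E by exact: le_trans (f0 x) (fg x).
rewrite !ge0_integralTE//; apply: ereal_sup_le => _ [h /= hf <-].
by exists h => //= x; exact: le_trans (hf x) (fg x).
Qed.

(* Unlike [le_normr_Rintegral], no measurability of [f] is required, so the
   integrand of [Vc] never has to be shown measurable in k. *)
Lemma le_normr_Rintegral_dominated (f g : T -> R) :
  (forall x, `|f x| <= g x) -> m.-integrable setT (EFin \o g) ->
  `|Rintegral m setT f| <= Rintegral m setT g.
Proof.
move=> fg ig.
have g0 x : 0 <= g x by exact: le_trans (normr_ge0 _) (fg x).
pose G := (\int[m]_x (g x)%:E)%E.
have Gfin : (G < +oo)%E.
  apply: le_lt_trans (integrableP _ _ _ ig).2.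
  by apply: ge0_le_integral_nomeas => x /=; rewrite lee_fin ?ler_norm.
have part_le (h : T -> \bar R) : (forall x, 0 <= h x)%E ->
    (forall x, h x <= (g x)%:E)%E ->
    exists2 r : R, (\int[m]_x h x = r%:E)%E & 0 <= r <= fine G.
  move=> h0 hg.
  have h_ge0 : (0 <= \int[m]_x h x)%E by exact: integral_ge0.
  have hG : (\int[m]_x h x <= G)%E by exact: ge0_le_integral_nomeas.
  have h_fin : (\int[m]_x h x)%E \is a fin_num.
    by rewrite ge0_fin_numE //; exact: le_lt_trans hG Gfin.
  exists (fine (\int[m]_x h x)%E); first by rewrite fineK.
  rewrite fine_ge0 //= -lee_fin !fineK //.
  by rewrite ge0_fin_numE // (le_trans h_ge0).
have [r rE /andP[r0 rG]] : exists2 r : R, (\int[m]_x (EFin \o f)^\+ x = r%:E)%E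
    & 0 <= r <= fine G.
  apply: part_le => [x|x]; first exact: funepos_ge0.
  rewrite funeposE /= -EFin_max lee_fin ge_max g0 andbT.
  exact: le_trans (ler_norm _) (fg x).
have [s sE /andP[s0 sG]] : exists2 s : R, (\int[m]_x (EFin \o f)^\- x = s%:E)%E
    & 0 <= s <= fine G.
  apply: part_le => [x|x]; first exact: funeneg_ge0.
  rewrite funenegE /= -EFin_max lee_fin ge_max g0 andbT.
  by apply: le_trans (fg x); rewrite -normrN ler_norm.
rewrite /Rintegral integralE rE sE /= ler_norml; apply/andP; split; lra.
Qed.

End DominatedIntegral.

Section RintegralFubini.
Context {d1 d2} {T1 : measurableType d1} {T2 : measurableType d2} {R : realType}.
Context {m1 : {sigma_finite_measure set T1 -> \bar R}}
        {m2 : {sigma_finite_measure set T2 -> \bar R}}.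

Lemma Rintegral_fubini (F : T1 -> T2 -> R) :
  (product_measure1 m1 m2).-integrable setT (fun p => (F p.1 p.2)%:E) ->
  (forall s, m2.-integrable setT (EFin \o F s)) ->
  Rintegral m1 setT (fun s => Rintegral m2 setT (F s)) =
  Rintegral (product_measure1 m1 m2) setT (fun p => F p.1 p.2).
Proof.
move=> iF iFs; rewrite /Rintegral -(integral12_prod_meas1 iF); congr fine.
apply: eq_integral => s _; rewrite /fubini_F /= fineK //.
exact: integrable_fin_num (iFs s).
Qed.

End RintegralFubini.

Section LebesgueIntegrability.
Context {R : realType}.
Local Notation mu := (@lebR R).
Local Notation mu2 := (product_measure1 (@lebR R) (@lebR R)).

Lemma continuous_expR_Nabs (a : R) : continuous (fun k : R => expR (- (a * `|k|))).
Proof.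
move=> x; apply: continuous_comp; last exact: continuous_expR.
by apply: continuousN; apply: continuousM; [exact: cst_continuous | exact: norm_continuous].
Qed.

(* On [0, +oo) the integrand is [a^-1] times the exponential density. *)
Lemma integrable_expR_Nabs (a : R) : 0 < a ->
  mu.-integrable setT (EFin \o (fun k : R => expR (- (a * `|k|)))).
Proof.
move=> a0.
have mf : measurable_fun setT (fun k : R => expR (- (a * `|k|))).
  exact: continuous_measurable_fun (continuous_expR_Nabs a).
apply/integrableP; split; first exact/measurable_EFinP.
under eq_integral do rewrite /= ger0_norm ?expR_ge0//.
rewrite ge0_symfun_integralT //; last 2 first.
- exact: continuous_expR_Nabs.
- by move=> x /=; rewrite normrN.
rewrite (_ : (\int[mu]_(x in [set x | (0 <= x)%R]) (expR (- (a * `|x|)))%:E)%E =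
    (\int[mu]_(x in [set x | (0 <= x)%R]) (a^-1 * exponential_pdf a x)%:E)%E); last first.
  apply: eq_integral => x; rewrite inE /= => x0.
  rewrite exponential_pdfE //=; congr EFin.
  by rewrite mulrA mulVf ?gt_eqF // mul1r ger0_norm // mulNr.
have pdf_ge0 x : 0 <= a^-1 * exponential_pdf a x.
  apply: mulr_ge0; first by rewrite invr_ge0 ltW.
  by apply: exponential_pdf_ge0; exact: ltW.
have mp : measurable_fun setT (fun x => a^-1 * exponential_pdf a x).
  exact: measurable_funM (measurable_cst _) (measurable_exponential_pdf _).
apply: (@le_lt_trans _ _ (2%:E * \int[mu]_x (a^-1 * exponential_pdf a x)%:E)%E).
  rewrite lee_pmul2l //; apply: ge0_subset_integral => //.
  - by rewrite -set_itvcy.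
  - exact/measurable_EFinP.
  - by move=> x _; rewrite lee_fin.
under eq_integral do rewrite EFinM.
rewrite ge0_integralZl_EFin ?invr_ge0 ?ltW //.
- by rewrite integral_exponential_pdf // mule1 -EFinM ltry.
- by move=> x _; rewrite lee_fin; apply: exponential_pdf_ge0; exact: ltW.
- by apply/measurable_EFinP; exact: measurable_exponential_pdf.
Qed.

Lemma integrable_indic_box (x0 x1 y0 y1 : R) :
  mu2.-integrable setT (fun p : R * R => (\1_(`[x0, x1] `*` `[y0, y1]) p)%:E).
Proof.
have mA : measurable (`[x0, x1] `*` `[y0, y1] : set (R * R)) by exact: measurableX.
apply/integrableP; split; first exact/measurable_EFinP/measurable_indic.
under eq_integral do rewrite gee0_abs ?lee_fin //.
rewrite integral_indic // setIT.
have mx : measurable (`[x0, x1] : set R) by [].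
have my : measurable (`[y0, y1] : set R) by [].
have /= -> := product_measure1E mu mu mx my.
by rewrite !lebesgue_measure_itv /=; case: ifP; case: ifP => //= _ _;
  rewrite ?mule0 ?mul0e -?EFinD -?EFinM ?ltry.
Qed.

Lemma integrable_bounded_box (F : R -> R -> R) (c x0 x1 y0 y1 : R) :
  measurable_fun setT (fun p : R * R => F p.1 p.2) ->
  (forall s y, `|F s y| <= c) ->
  (forall s y, F s y != 0 -> (x0 <= s <= x1) /\ (y0 <= y <= y1)) ->
  mu2.-integrable setT (fun p => (F p.1 p.2)%:E) /\
  (forall s, mu.-integrable setT (EFin \o F s)).
Proof.
move=> mF Fc Fsupp; split.
  apply: (le_integrable measurableT _ _
    (integrableZl measurableT c (integrable_indic_box x0 x1 y0 y1))).
    exact/measurable_EFinP.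
  move=> [s y] _ /=; rewrite lee_fin.
  have [->|nz] := eqVneq (F s y) 0; first by rewrite normr0.
  have [/andP[h1 h2] /andP[h3 h4]] := Fsupp s y nz.
  rewrite indicE (_ : (s, y) \in _ = true) ?mulr1; last first.
    by apply/mem_set; split; rewrite /= in_itv /= ?h1 ?h2 ?h3 ?h4.
  exact: le_trans (Fc s y) (ler_norm _).
move=> s.
apply: (le_integrable measurableT _ _
  (integrableZl measurableT c (@integrable_indic_itv R y0 y1 true false))).
  by apply/measurable_EFinP; exact: measurableT_comp mF (pair1_measurable s).
move=> y _ /=; rewrite lee_fin.
have [->|nz] := eqVneq (F s y) 0; first by rewrite normr0.
have [_ /andP[h3 h4]] := Fsupp s y nz.
rewrite indicE (_ : y \in _ = true) ?mulr1; last first.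
  by apply/mem_set; rewrite /= in_itv /= h3 h4.
exact: le_trans (Fc s y) (ler_norm _).
Qed.

End LebesgueIntegrability.

Section TrigBounds.
Context {R : realType}.

Lemma le_dist_derive_le1 (f df : R -> R) :
  (forall x, is_derive x (1 : R) f (df x)) -> continuous f ->
  (forall x, `|df x| <= 1) -> forall u v, `|f u - f v| <= `|u - v|.
Proof.
move=> fd fc df1.
suff le_uv u v : u <= v -> `|f u - f v| <= `|u - v|.
  move=> u v; have [uv|vu] := leP u v; first exact: le_uv.
  by rewrite distrC (distrC u); apply: le_uv; exact: ltW.
move=> uv; have [c _ fvu] := MVT_segment uv (fun x _ => fd x) (continuous_subspaceT fc).
by rewrite distrC fvu normrM (distrC u v) ler_piMl.
Qed.

Lemma norm_sin_le (t : R) : `|sin t| <= `|t|.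
Proof.
have := @le_dist_derive_le1 sin cos (@is_derive_sin R) (@continuous_sin R) (@cos_max R) t 0.
by rewrite sin0 !subr0.
Qed.

Lemma norm_cos_sub1_le (t : R) : `|cos t - 1| <= `|t|.
Proof.
have := @le_dist_derive_le1 cos (fun x => - sin x) (@is_derive_cos R) (@continuous_cos R) _ t 0.
by rewrite cos0 subr0; apply => x; rewrite normrN sin_max.
Qed.

Lemma expR_Nmul_le1 (k s : R) : 0 <= s -> expR (- (`|k| * s)) <= 1.
Proof. by move=> s0; rewrite -expR0 ler_expR oppr_le0 mulr_ge0. Qed.

Lemma norm_cos_expR_sub1_le (k s t : R) : 0 <= s ->
  `|cos t * expR (- (`|k| * s)) - 1| <= `|k| * s + `|t|.
Proof.
move=> s0; set e := expR _.
have e0 : 0 <= e := expR_ge0 _.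
have e1 : e <= 1 := expR_Nmul_le1 k s s0.
have one_sub_e : 1 - e <= `|k| * s.
  by have := expR_ge1Dx (- (`|k| * s)); rewrite -/e; lra.
have cos_e : `|(cos t - 1) * e| <= `|t|.
  rewrite normrM (ger0_norm e0); apply: le_trans _ (norm_cos_sub1_le t).
  by apply: ler_piMr => //; exact: normr_ge0.
rewrite (_ : cos t * e - 1 = (cos t - 1) * e - (1 - e)); last by ring.
apply: le_trans (ler_normB _ _) _; rewrite (ger0_norm (_ : 0 <= 1 - e)); lra.
Qed.

Lemma norm_sin_expR_le (k s t : R) : 0 <= s -> `|sin t * expR (- (`|k| * s))| <= `|t|.
Proof.
move=> s0; rewrite normrM (ger0_norm (expR_ge0 _)).
apply: le_trans _ (norm_sin_le t); apply: ler_piMr => //; exact: expR_Nmul_le1.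
Qed.

End TrigBounds.

Section ComplexModulus.
Context {R : realType}.
Implicit Types (z w : R[i]) (r t : R).

Lemma cmodE z : cmod z = Normc.normc z.
Proof. by case: z. Qed.

Lemma cmod_ge0 z : 0 <= cmod z.
Proof. exact: sqrtr_ge0. Qed.

Lemma cmodM z w : cmod (z * w) = cmod z * cmod w.
Proof. by rewrite !cmodE Normc.normcM. Qed.

Lemma cmodV z : cmod z^-1 = (cmod z)^-1.
Proof. by rewrite !cmodE Normc.normcV. Qed.

Lemma cmod_rC r : cmod (rC r) = `|r|.
Proof. by rewrite /cmod /= expr0n /= addr0 sqrtr_sqr. Qed.

Lemma cmod_cexpi t : cmod (cexpi t) = 1.
Proof. by rewrite /cmod /= cos2Dsin2 sqrtr1. Qed.

Lemma cmod_le_Re_Im z : cmod z <= `|complex.Re z| + `|complex.Im z|.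
Proof.
have nn : 0 <= `|complex.Re z| + `|complex.Im z| by rewrite addr_ge0.
rewrite -[leRHS]ger0_norm // -sqrtr_sqr ler_sqrt ?sqr_ge0 //.
rewrite -(real_normK (num_real (complex.Re z))) -(real_normK (num_real (complex.Im z))).
have : 0 <= `|complex.Re z| * `|complex.Im z| by rewrite mulr_ge0.
nra.
Qed.

Lemma Re_le_cmod z : `|complex.Re z| <= cmod z.
Proof. by rewrite -sqrtr_sqr ler_sqrt ?addr_ge0 ?sqr_ge0 // lerDl sqr_ge0. Qed.

Lemma Im_le_cmod z : `|complex.Im z| <= cmod z.
Proof. by rewrite -sqrtr_sqr ler_sqrt ?addr_ge0 ?sqr_ge0 // lerDr sqr_ge0. Qed.

Lemma complex_neq0 z : complex.Re z != 0 -> z != 0.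
Proof. by case: z => x y /= x0; apply: contraNneq x0 => -[->]. Qed.

Lemma cmod_cint_le (f : R -> R[i]) (g : R -> R) :
  (@lebR R).-integrable setT (EFin \o g) -> (forall t, cmod (f t) <= g t) ->
  cmod (cint f) <= 2 * Rintegral (@lebR R) setT g.
Proof.
move=> ig fg; apply: le_trans (cmod_le_Re_Im _) _; rewrite mulr2n mulrDl mul1r.
by apply: lerD; apply: le_normr_Rintegral_dominated => // t;
  [exact: le_trans (Re_le_cmod _) (fg t) | exact: le_trans (Im_le_cmod _) (fg t)].
Qed.

End ComplexModulus.

Lemma measurable_fun_Nscale {R : realType} (f : R -> R) (c : R) :
  continuous f -> measurable_fun setT (fun y : R => f (- (c * y))).
Proof.
move=> cf; apply: continuous_measurable_fun => x; apply: continuous_comp; last exact: cf.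
by apply: continuousN; apply: continuousM; [exact: cst_continuous | exact: cvg_id].
Qed.

Section FourierMoment.
Variables (R : realType) (rho : R -> R -> R) (M x0 x1 y0 y1 : R).
Local Notation mu := (@lebR R).
Local Notation mu2 := (product_measure1 (@lebR R) (@lebR R)).
Hypothesis rho_meas : measurable_fun setT (fun p : R * R => rho p.1 p.2).
Hypothesis rho_le : forall s y, `|rho s y| <= M.
Hypothesis rho_supp : forall s y, rho s y != 0 -> (x0 <= s <= x1) /\ (y0 <= y <= y1).
Hypothesis x0_ge0 : 0 <= x0.
Hypothesis rho_mean0 : (\int[mu2]_p (rho p.1 p.2)%:E)%E = 0%E.

Let box : set (R * R) := `[x0, x1] `*` `[y0, y1].
Let area := Rintegral mu2 setT (fun p => \1_box p : R).
Let L := `|x1| + `|y0| + `|y1|.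

Lemma integrable_rho_mul (u : R -> R -> R) :
  measurable_fun setT (fun p : R * R => u p.1 p.2) ->
  (forall s y, rho s y != 0 -> `|u s y| <= 1) ->
  mu2.-integrable setT (fun p => (rho p.1 p.2 * u p.1 p.2)%:E) /\
  (forall s, mu.-integrable setT (EFin \o (fun y => rho s y * u s y))).
Proof.
move=> mu_ u1; apply: (@integrable_bounded_box _ _ M x0 x1 y0 y1).
- exact: measurable_funM.
- move=> s y; have [r0|r0] := eqVneq (rho s y) 0.
    by rewrite r0 mul0r normr0 (le_trans _ (rho_le s y)).
  by rewrite normrM -[leRHS]mulr1 ler_pM // u1.
- by move=> s y; rewrite mulf_eq0 negb_or => /andP[/rho_supp].
Qed.

Lemma integrable_rho_wave (w : R -> R) k : continuous w -> (forall t, `|w t| <= 1) ->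
  mu2.-integrable setT
    (fun p => (rho p.1 p.2 * (w (- (k * p.2)) * expR (- (`|k| * p.1))))%:E) /\
  (forall s, mu.-integrable setT
    (EFin \o (fun y => rho s y * (w (- (k * y)) * expR (- (`|k| * s)))))).
Proof.
move=> cw w1.
apply: (@integrable_rho_mul (fun s y => w (- (k * y)) * expR (- (`|k| * s)))).
  exact: measurable_funM (measurableT_comp (measurable_fun_Nscale _ k cw) measurable_snd)
    (measurableT_comp (measurable_fun_Nscale _ `|k| (@continuous_expR R)) measurable_fst).
move=> s y /rho_supp[/andP[xs _] _]; have s0 : 0 <= s := le_trans x0_ge0 xs.
rewrite normrM (ger0_norm (expR_ge0 _)); apply: mulr_ile1 => //; exact: expR_Nmul_le1.
Qed.

Lemma Rintegral_rho_wave (w : R -> R) k : continuous w -> (forall t, `|w t| <= 1) ->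
  Rintegral mu setT (fun s =>
    Rintegral mu setT (fun y => rho s y * w (- (k * y))) * expR (- (`|k| * s))) =
  Rintegral mu2 setT (fun p => rho p.1 p.2 * (w (- (k * p.2)) * expR (- (`|k| * p.1)))).
Proof.
move=> cw w1; have [iF iF_s] := integrable_rho_wave w k cw w1.
have [_ i_w_s] := @integrable_rho_mul (fun _ y => w (- (k * y)))
  (measurableT_comp (measurable_fun_Nscale _ k cw) measurable_snd) (fun s y _ => w1 _).
rewrite -(Rintegral_fubini _ iF iF_s); apply: eq_Rintegral => s _.
by rewrite -RintegralZr //; apply: eq_Rintegral => y _; rewrite mulrA.
Qed.

Lemma Re_Ik k : complex.Re (Ik rho k) =
  Rintegral mu2 setT (fun p => rho p.1 p.2 * (cos (- (k * p.2)) * expR (- (`|k| * p.1)))).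
Proof.
rewrite /Ik /cint /rho_hat /cint /= -(Rintegral_rho_wave _ k (@continuous_cos R) (@cos_max R)).
apply: eq_Rintegral => s _; rewrite mulr0 subr0; congr (_ * _).
by apply: eq_Rintegral => y _; rewrite mul0r subr0.
Qed.

Lemma Im_Ik k : complex.Im (Ik rho k) =
  Rintegral mu2 setT (fun p => rho p.1 p.2 * (sin (- (k * p.2)) * expR (- (`|k| * p.1)))).
Proof.
rewrite /Ik /cint /rho_hat /cint /= -(Rintegral_rho_wave _ k (@continuous_sin R) (@sin_max R)).
apply: eq_Rintegral => s _; rewrite mulr0 add0r; congr (_ * _).
by apply: eq_Rintegral => y _; rewrite mul0r addr0.
Qed.

Lemma normr_Rintegral_supp_le (F : R * R -> R) (c : R) : 0 <= c ->
  (forall s y, rho s y = 0 -> F (s, y) = 0) ->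
  (forall s y, rho s y != 0 -> `|F (s, y)| <= c) ->
  `|Rintegral mu2 setT F| <= c * area.
Proof.
move=> c0 F0 Fc; rewrite /area -RintegralZl //; last exact: integrable_indic_box.
apply: le_normr_Rintegral_dominated => [[s y] /=|].
  have [r0|r0] := eqVneq (rho s y) 0; first by rewrite F0 // normr0 indicE mulr_ge0.
  have [sx yy] := rho_supp s y r0.
  by rewrite indicE (_ : (s, y) \in box = true) ?mulr1 ?Fc //; apply/mem_set.
have := integrableZl measurableT c (integrable_indic_box x0 x1 y0 y1).
by apply: eq_integrable => // p _ /=; rewrite EFinM.
Qed.

Lemma normr_rho_mul_le k s y (X : R) : rho s y != 0 ->
  `|X| <= `|k| * s + `|k * y| -> `|rho s y * X| <= `|k| * (M * L).
Proof.
move=> r0 hX; have [/andP[x0s sx1] /andP[y0y yy1]] := rho_supp s y r0.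
have s_le : s <= `|x1| := le_trans sx1 (ler_norm x1).
have y_le : `|y| <= `|y0| + `|y1|.
  have := ler_norm (- y0); rewrite normrN => ny0.
  have := ler_norm y1; have := normr_ge0 y0; have := normr_ge0 y1.
  by case: (lerP 0 y) => [/ger0_norm|/ltr0_norm] ->; lra.
have X_le : `|X| <= `|k| * L.
  apply: le_trans hX _; rewrite normrM /L -mulrDr ler_wpM2l //; lra.
rewrite normrM mulrCA; apply: ler_pM => //; exact: rho_le.
Qed.

Lemma cmod_Ik_le k : cmod (Ik rho k) <= `|k| * (2 * (M * L * area)).
Proof.
have c0 : 0 <= `|k| * (M * L).
  by rewrite !mulr_ge0 ?(le_trans _ (rho_le 0 0)) // /L !addr_ge0.
have supp_ge0 s y : rho s y != 0 -> 0 <= s.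
  by case/rho_supp => /andP[xs _] _; exact: le_trans xs.
have [i_cos _] := integrable_rho_wave cos k (@continuous_cos R) (@cos_max R).
have norm1 : `|1 : R| <= 1 by rewrite normr1.
have [i_rho _] := @integrable_rho_mul (fun _ _ => 1) (measurable_cst _) (fun _ _ _ => norm1).
have Re_le : `|complex.Re (Ik rho k)| <= `|k| * (M * L) * area.
  have rho_int0 : Rintegral mu2 setT (fun p => rho p.1 p.2 * 1) = 0.
    by under eq_Rintegral do rewrite mulr1; rewrite /Rintegral rho_mean0.
  rewrite Re_Ik -[X in `|X|]subr0 -rho_int0 -RintegralB //.
  apply: normr_Rintegral_supp_le => // [s y /= ->|s y r0 /=]; first by rewrite !mul0r subr0.
  rewrite -mulrBr; apply: normr_rho_mul_le => //.
  by rewrite -[`|k * y|]normrN; exact: norm_cos_expR_sub1_le _ _ _ (supp_ge0 _ _ r0).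
have Im_le : `|complex.Im (Ik rho k)| <= `|k| * (M * L) * area.
  rewrite Im_Ik; apply: normr_Rintegral_supp_le => // [s y /= ->|s y r0 /=].
    by rewrite mul0r.
  apply: normr_rho_mul_le => //; rewrite -[`|k * y|]normrN.
  have s0 := supp_ge0 _ _ r0.
  by apply: ler_wpDl; [rewrite mulr_ge0 | exact: norm_sin_expR_le].
apply: le_trans (cmod_le_Re_Im _) _.
have -> : `|k| * (2 * (M * L * area)) = `|k| * (M * L) * area + `|k| * (M * L) * area.
  by ring.
exact: lerD.
Qed.

End FourierMoment.

Lemma in_P_cmod_Ik_le {R : realType} (a : R) (rho : R -> R -> R) : 0 < a -> in_P a rho ->
  exists2 K, 0 <= K & forall k, cmod (Ik rho k) <= `|k| * K.
Proof.
move=> a0 [rho_meas [[M rho_le] [[x0 [x1 [y0 [y1 [ax0 rho_supp]]]]] [_ rho_mean0]]]].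
have x0_ge0 : 0 <= x0 by rewrite ltW // (lt_trans a0).
eexists; last exact: cmod_Ik_le rho_meas rho_le rho_supp x0_ge0 rho_mean0.
rewrite !mulr_ge0 ?addr_ge0 ?(le_trans _ (rho_le 0 0)) //.
by apply: Rintegral_ge0 => p _; rewrite indicE.
Qed.

Definition Ak_denominator {R : realType} (a beta lam delta k : R) : R[i] :=
  rC (expR (- (`|k| * a))) *
  (rC `|k| * psi_plus a beta lam delta k + psi_minus a beta lam delta k).

Section AkDenominator.
Context {R : realType}.
Variables (a beta lam delta : R).
Local Notation es := (eps_s delta).
Local Notation ec := (eps_c beta lam delta).

Lemma Ak_denominator_eq k :
  Ak_denominator a beta lam delta k * (2 * es) =
  rC `|k| * ((es + ec) * (1 + es) + (es - ec) * (1 - es) * rC (expR (- (`|k| * a))) ^+ 2).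
Proof.
rewrite /Ak_denominator /psi_plus /psi_minus /chi_c.
have es0 : es != 0 by apply: complex_neq0 => /=; rewrite oppr_eq0 oner_eq0.
have ec0 : ec != 0 by apply: complex_neq0 => /=; rewrite oner_eq0.
have E0 : rC (expR (- (`|k| * a))) != 0.
  by apply: complex_neq0 => /=; rewrite gt_eqF // expR_gt0.
have -> : rC (expR (`|k| * a)) = (rC (expR (- (`|k| * a))))^-1.
  have rCE r : rC r = real_complex R r by [].
  by rewrite !rCE -fmorphV expRN invrK.
move: es0 ec0 E0; set E := rC (expR _) => es0 ec0 E0.
have two0 : (2 : R[i]) != 0 by rewrite pnatr_eq0.
by field; rewrite es0 ec0 E0.
Qed.

Hypotheses (delta_gt0 : 0 < delta) (delta_lt1 : delta < 1).
Hypothesis mu_ge0 : 0 <= mu_of beta lam delta.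

Lemma Re_Ak_denominator_le (e : R) :
  complex.Re ((es + ec) * (1 + es) + (es - ec) * (1 - es) * rC e ^+ 2) <= - (3 * e ^+ 2).
Proof.
rewrite /eps_s /eps_c /rC /=.
have dm : 0 <= delta * mu_of beta lam delta by rewrite mulr_ge0 // ltW.
have edm : 0 <= e ^+ 2 * (delta * mu_of beta lam delta) by rewrite mulr_ge0 ?sqr_ge0.
have ed : e ^+ 2 * (delta ^+ 2 - 1) <= 0.
  by rewrite mulr_ge0_le0 ?sqr_ge0 // subr_le0 expr_le1 ?ltW.
rewrite !expr2 in edm ed *; nra.
Qed.

Lemma cmod_eps_s_le : cmod es <= 2.
Proof.
have two : (2 : R) = Num.sqrt (2 ^+ 2) by rewrite sqrtr_sqr ger0_norm.
rewrite /cmod /= [leRHS]two ler_sqrt ?sqr_ge0 // !expr2 mulrNN mulr1.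
have d1 : delta * delta <= 1 by rewrite -[1]mulr1 ler_pM // ltW.
lra.
Qed.

Lemma cmod_Ak_denominator_ge k :
  3 * `|k| * expR (- (`|k| * a)) ^+ 2 / 4 <= cmod (Ak_denominator a beta lam delta k).
Proof.
set E := expR _.
pose B := (es + ec) * (1 + es) + (es - ec) * (1 - es) * rC E ^+ 2.
have DB : cmod (Ak_denominator a beta lam delta k) * (cmod 2 * cmod es) = `|k| * cmod B.
  by rewrite -cmodM -cmodM Ak_denominator_eq cmodM cmod_rC normr_id.
have B_ge : 3 * E ^+ 2 <= cmod B.
  apply: le_trans (Re_le_cmod B); rewrite -normrN; apply: le_trans (ler_norm _).
  by rewrite lerNr; exact: Re_Ak_denominator_le.
have twoes : cmod 2 * cmod es <= 4.
  have -> : cmod (2 : R[i]) = 2.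
    by rewrite /cmod /= addr0 expr0n /= addr0 sqrtr_sqr ger0_norm.
  by have := cmod_eps_s_le; lra.
rewrite ler_pdivrMr //; apply: le_trans (_ : `|k| * cmod B <= _).
  by rewrite [3 * _]mulrC -mulrA ler_wpM2l.
by rewrite -DB ler_wpM2l ?cmod_ge0.
Qed.

Lemma cmod_Ak_le (rho : R -> R -> R) (K k : R) : 0 <= K ->
  cmod (Ik rho k) <= `|k| * K ->
  cmod (Ak a beta lam rho delta k) <= 4 * K / 3 / expR (- (`|k| * a)) ^+ 2.
Proof.
move=> K0 IkK; rewrite /Ak -/(Ak_denominator a beta lam delta k) cmodM cmodV.
have E2_gt0 : 0 < expR (- (`|k| * a)) ^+ 2 by rewrite exprn_gt0 ?expR_gt0.
(* At k = 0 the denominator vanishes, but so does I_0. *)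
have [k0|k0] := eqVneq k 0.
  have -> : cmod (Ik rho k) = 0.
    by apply/le_anti; rewrite cmod_ge0 andbT (le_trans IkK) // k0 normr0 mul0r.
  by rewrite mul0r !divr_ge0 ?mulr_ge0 // ltW.
have D_ge := cmod_Ak_denominator_ge k.
have D_gt0 : 0 < cmod (Ak_denominator a beta lam delta k).
  by apply: lt_le_trans D_ge; rewrite divr_gt0 // !mulr_gt0 // ?normr_gt0 ?expR_gt0.
rewrite ler_pdivrMr //; apply: le_trans IkK _.
apply: le_trans (_ : _ <= 4 * K / 3 / expR (- (`|k| * a)) ^+ 2 *
  (3 * `|k| * expR (- (`|k| * a)) ^+ 2 / 4)) _.
  by rewrite le_eqVlt; apply/orP; left; apply/eqP; field; rewrite gt_eqF ?expR_gt0.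
by rewrite ler_wpM2l // !divr_ge0 ?mulr_ge0 // ltW.
Qed.

Lemma cmod_Vc_integrand_le (rho : R -> R -> R) (K k x y : R) : 0 <= K ->
  cmod (Ik rho k) <= `|k| * K -> x < - (3 * a) ->
  cmod (Ak a beta lam rho delta k * rC (expR (`|k| * x)) * cexpi (k * y))
    <= 4 * K / 3 * expR (- (a * `|k|)).
Proof.
move=> K0 IkK x_lt.
rewrite cmodM cmodM cmod_cexpi mulr1 cmod_rC (ger0_norm (expR_ge0 _)).
apply: (@le_trans _ _ (4 * K / 3 / expR (- (`|k| * a)) ^+ 2 * expR (`|k| * x))).
  by apply: ler_wpM2r; [exact: expR_ge0 | exact: cmod_Ak_le K0 IkK].
rewrite -mulrA ler_wpM2l ?divr_ge0 ?mulr_ge0 //.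
rewrite -expRM_natl -expRN mulrC -expRD ler_expR.
have := normr_ge0 k; nra.
Qed.

End AkDenominator.

Theorem lemma6p3 (R : realType) (a beta lam delta_mu : R) (rho : R -> R -> R) :
  0 < a -> 0 < beta ->
  (beta < 1 -> 0 < lam) -> (beta = 1 -> -1 <= lam) -> (1 < beta -> lam != 0) ->
  0 < delta_mu < 1 ->
  (forall delta, 0 < delta <= delta_mu -> 0 <= mu_of beta lam delta) ->
  in_P a rho ->
  exists C9 : R, 0 < C9 /\
    forall delta x y, 0 < delta <= delta_mu -> x < - (3 * a) ->
      cmod (Vc a beta lam rho delta x y) <= C9.
Proof.
move=> a0 _ _ _ _ /andP[_ dmu_lt1] mu_ge0 rhoP.
have [K K0 IkK] := in_P_cmod_Ik_le _ _ a0 rhoP.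
pose g (k : R) := 4 * K / 3 * expR (- (a * `|k|)).
have g_int : (@lebR R).-integrable setT (EFin \o g).
  have := integrableZl measurableT (4 * K / 3) (integrable_expR_Nabs _ a0).
  by apply: eq_integrable => // t _ /=; rewrite EFinM.
have pi_ge0 : 0 <= (2 * pi)^-1 :> R by rewrite invr_ge0 mulr_ge0 ?pi_ge0.
have g_ge0 : 0 <= Rintegral (@lebR R) setT g.
  by apply: Rintegral_ge0 => k _; rewrite mulr_ge0 ?expR_ge0 ?divr_ge0 ?mulr_ge0.
exists ((2 * pi)^-1 * (2 * Rintegral (@lebR R) setT g) + 1); split.
  by rewrite ltr_wpDl // !mulr_ge0.
move=> delta x y /andP[d0 d_le] x_lt.
have d_lt1 : delta < 1 := le_lt_trans d_le dmu_lt1.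
have mu_d : 0 <= mu_of beta lam delta by apply: mu_ge0; rewrite d0.
rewrite /Vc cmodM cmod_rC (ger0_norm pi_ge0) -[leLHS]addr0 lerD //.
apply: ler_wpM2l => //; apply: cmod_cint_le g_int _ => k.
by apply: cmod_Vc_integrand_le => //; exact: IkK.
Qed.
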